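(* Let $F$ be a positive integer and $S$ an irreducible numerical semigroup with Frobenius number $F$. Define $S_0=S$ and, for $n\ge 0$, $S_{n+1}=(S_n\setminus\{\mathrm{m}(S_n)\})\cup\{F-\mathrm{m}(S_n)\}$ if $\mathrm{m}(S_n)<\frac{F}{2}$, and $S_{n+1}=S_n$ otherwise. Then every $S_n$ is an irreducible numerical semigroup with Frobenius number $F$, and if $k=\#\{s\in S: s<\frac{F}{2}\}-1$, then $S_{k+n}=\mathrm{C}(F)$ for all $n\in\mathbb{N}$.
   Context: A numerical semigroup is a subset $S\subseteq\mathbb{N}$ (with $\mathbb{N}$ the set of nonnegative integers) closed under addition, containing $0$, with $\mathbb{N}\setminus S$ finite. Its Frobenius number is the largest integer not in $S$; its multiplicity $\mathrm{m}(S)$ is the smallest positive integer in $S$. A numerical semigroup is irreducible if it cannot be expressed as the intersection of two numerical semigroups properly containing it. For a positive integer $F$, $\mathrm{C}(F)=\{0\}\cup\{z\in\mathbb{Z}: z\ge \lceil\frac{F+1}{2}\rceil\}\setminus\{F\}$ (i.e. $\{0\}\cup\{z\ge\frac{F+1}{2}\}\setminus\{F\}$ for $F$ odd and $\{0\}\cup\{z\ge \frac F2+1\}\setminus\{F\}$ for $F$ even). *)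

From Stdlib Require Import ClassicalEpsilon.
From mathcomp Require Import all_boot.
Set Implicit Arguments. Unset Strict Implicit. Unset Printing Implicit Defensive.

Definition is_numsg (S : pred nat) : Prop :=
  [/\ S 0, (forall x y, S x -> S y -> S (x + y)) & exists N, forall n, N <= n -> S n].

Definition frobenius_of (S : pred nat) (F : nat) : Prop :=
  ~~ S F /\ (forall n, F < n -> S n).

Definition proper_supset (T S : pred nat) : Prop :=
  (forall x, S x -> T x) /\ exists x, T x && ~~ S x.

Definition irreducible_numsg (S : pred nat) : Prop :=
  is_numsg S /\
  ~ (exists T1 T2 : pred nat,
        [/\ is_numsg T1, is_numsg T2, proper_supset T1 S, proper_supset T2 S
          & forall x, S x = T1 x && T2 x]).

(* multiplicity: the smallest positive element of S (0 if there is none, a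
   case that never occurs for numerical semigroups). *)
Definition mult (S : pred nat) : nat :=
  match excluded_middle_informative (exists n, (0 < n) && S n) with
  | left H => ex_minn H
  | right _ => 0
  end.

Definition step (F : nat) (S : pred nat) : pred nat :=
  if 2 * mult S < F then
    fun x => (S x && (x != mult S)) || (x == F - mult S)
  else S.

Definition seqS (F : nat) (S : pred nat) (n : nat) : pred nat := iter n (step F) S.

(* C(F) = {0} u {z >= ceil((F+1)/2)} \ {F} ; ceil((F+1)/2) = (F+2)./2 *)
Definition CF (F : nat) : pred nat :=
  fun z => (z == 0) || (((F + 2)./2 <= z) && (z != F)).

Definition count_small (F : nat) (S : pred nat) : nat :=
  count (fun s => S s && (2 * s < F)) (iota 0 F).

From Stdlib Require Import ClassicalEpsilon.
From mathcomp Require Import all_boot zify.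

Set Implicit Arguments.
Unset Strict Implicit.
Unset Printing Implicit Defensive.

(* A numerical semigroup S with Frobenius number F is irreducible exactly when
   for every x <= F with 2x <> F one of x, F - x lies in S.  If the
   multiplicity m satisfies 2m < F, replacing m by F - m keeps this pairing
   property and F, and removes one element below F/2; once 2m >= F the pairing
   property forces S = C(F).  Since 0 is always an element below F/2, C(F) is
   reached after #{s in S : s < F/2} - 1 steps. *)

(* Symmetric for F odd, pseudo-symmetric for F even. *)
Definition symmetric_about (F : nat) (S : pred nat) : Prop :=
  forall x, x <= F -> 2 * x != F -> S x || S (F - x).

Definition symmetric_numsg (F : nat) (S : pred nat) : Prop :=
  [/\ is_numsg S, frobenius_of S F & symmetric_about F S].

Lemma numsg0 (S : pred nat) : is_numsg S -> S 0.
Proof. by case. Qed.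

Lemma numsgD (S : pred nat) a b : is_numsg S -> S a -> S b -> S (a + b).
Proof. by case=> _ S_add _; apply: S_add. Qed.

Lemma mult_spec (S : pred nat) : is_numsg S ->
  [/\ 0 < mult S, S (mult S) & forall n, 0 < n -> S n -> mult S <= n].
Proof.
case=> _ _ [N SN].
have ex_pos : exists n, (0 < n) && S n by exists N.+1; rewrite SN ?leqnSn.
rewrite /mult; case: excluded_middle_informative => [ex|//].
case: ex_minnP => m /andP[m_gt0 Sm] m_min; split=> // n n_gt0 Sn.
by apply: m_min; rewrite n_gt0 Sn.
Qed.

Lemma numsg_adjoin (S : pred nat) (h : nat) : is_numsg S -> S (h + h) ->
  (forall s, 0 < s -> S s -> S (h + s)) -> is_numsg (fun z => S z || (z == h)).
Proof.
case=> S0 S_add [N SN] Shh Shs; split; first by rewrite S0.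
- have Shs0 s : S s -> S (h + s) || (h + s == h).
    by case: (posnP s) => [->|s_gt0] Ss; rewrite ?addn0 ?eqxx ?orbT ?Shs.
  move=> a b /orP[Sa|/eqP->] /orP[Sb|/eqP->].
  + by rewrite S_add.
  + by rewrite addnC Shs0.
  + exact: Shs0.
  + by rewrite Shh.
- by exists N => n /SN ->.
Qed.

Lemma count_predD1 (T : eqType) (p : pred T) (s : seq T) (m : T) :
  uniq s -> m \in s -> p m -> count p s = (count (predD1 p m) s).+1.
Proof.
move=> s_uniq ms pm; have /permP s_perm := perm_to_rem ms.
rewrite !s_perm /= pm eqxx add1n add0n; congr _.+1.
apply: eq_in_count => x; rewrite (mem_rem_uniq _ s_uniq) => /andP[xm _] /=.
by rewrite xm.
Qed.

Section Frobenius.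

Variables (F : nat) (S : pred nat).
Hypotheses (S_numsg : is_numsg S) (S_frob : frobenius_of S F).

Lemma frobenius_gap_le x : ~~ S x -> x <= F.
Proof. by rewrite leqNgt; apply: contra => /S_frob.2. Qed.

Lemma frobenius_neq_add a b : S a -> S b -> a + b != F.
Proof.
by move=> Sa Sb; apply: contraNneq S_frob.1 => <-; exact: numsgD.
Qed.

Lemma supset_frobenius (T : pred nat) : symmetric_about F S ->
  is_numsg T -> proper_supset T S -> T F.
Proof.
move=> S_sym [_ T_add _] [ST [x /andP[Tx Sx]]].
have xF := frobenius_gap_le Sx.
have [x2F|x2F] := eqVneq (2 * x) F; first by rewrite -x2F mul2n -addnn T_add.
move: (S_sym x xF x2F); rewrite (negbTE Sx) /= => SFx.
by rewrite -(subnKC xF); apply: T_add => //; apply: ST.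
Qed.

Lemma symmetric_irreducible : symmetric_about F S -> irreducible_numsg S.
Proof.
move=> S_sym; split=> // -[T1 [T2 [T1_numsg T2_numsg S_T1 S_T2 S_cap]]].
move: (S_cap F) S_frob.1 => ->.
by rewrite (supset_frobenius S_sym T1_numsg S_T1)
           (supset_frobenius S_sym T2_numsg S_T2).
Qed.

(* Take h the largest unpaired gap: F - h is unpaired as well, so 2h > F, and
   h + s not in S would give a larger unpaired gap. *)
Lemma exists_special_gap x : x <= F -> 2 * x != F -> ~~ S x -> ~~ S (F - x) ->
  exists h, [/\ ~~ S h, h != F, F < h + h & forall s, 0 < s -> S s -> S (h + s)].
Proof.
move=> xF x2F Sx SFx.
pose unpaired y := [&& y <= F, ~~ S y, ~~ S (F - y) & 2 * y != F].
have ex_unpaired : exists y, unpaired y by exists x; apply/and4P.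
have unpaired_le y : unpaired y -> y <= F by case/and4P.
have [h /and4P[hF Sh SFh h2F] h_max] := ex_maxnP ex_unpaired unpaired_le.
have Fh_unpaired : unpaired (F - h) by rewrite /unpaired leq_subr subKn // SFh Sh /=; lia.
have hF_gt : F < h + h by move: (h_max _ Fh_unpaired); lia.
exists h; split=> //; first by apply: contraNneq SFh => ->; rewrite subnn (numsg0 S_numsg).
move=> s s_gt0 Ss; apply/negPn/negP => Shs.
have hsF := frobenius_gap_le Shs.
have SFhs : ~~ S (F - (h + s)).
  apply: contra SFh => SFhs; have -> : F - h = F - (h + s) + s by lia.
  exact: numsgD.
have /h_max : unpaired (h + s) by apply/and4P; split=> //; lia.
lia.
Qed.

Lemma irreducible_symmetric : irreducible_numsg S -> symmetric_about F S.
Proof.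
case=> _ S_nred x xF x2F; apply/negPn/negP; rewrite negb_or => /andP[Sx SFx].
have [h [Sh hF hF_gt Sh_add]] := exists_special_gap xF x2F Sx SFx.
apply: S_nred; exists (fun z => S z || (z == h)), (fun z => S z || (z == F)).
split.
- by apply: numsg_adjoin; rewrite // S_frob.2.
- by apply: numsg_adjoin => [||s s_gt0 _]; rewrite // S_frob.2 //; lia.
- by split=> [x' ->|]; last by exists h; rewrite eqxx orbT Sh.
- by split=> [x' ->|]; last by exists F; rewrite eqxx orbT S_frob.1.
- by move=> z; case: (S z) => //=; case: eqP => // ->; rewrite (negbTE hF).
Qed.

End Frobenius.

Section SmallMultiplicity.

Variables (F : nat) (S : pred nat).
Hypotheses (S_numsg : is_numsg S) (S_frob : frobenius_of S F).
Hypothesis small_mult : 2 * mult S < F.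

Local Notation m := (mult S).

Let step_E x : step F S x = (S x && (x != m)) || (x == F - m).
Proof. by rewrite /step small_mult. Qed.

Let mult_lt b : S b -> b != m -> 0 < b -> m < b.
Proof. by move=> Sb bm b_gt0; have [_ _ /(_ b b_gt0 Sb)] := mult_spec S_numsg; lia. Qed.

Let step_pos_gt x : 0 < x -> step F S x -> m < x.
Proof. by move=> x_gt0; rewrite step_E => /orP[/andP[Sx xm]|/eqP->]; [apply: mult_lt | lia]. Qed.

Let step_gt x : F < x -> step F S x.
Proof. by move=> Fx; rewrite step_E S_frob.2 //=; lia. Qed.

Lemma step_numsg : is_numsg (step F S).
Proof.
have [m_gt0 _ _] := mult_spec S_numsg.
split; first by rewrite step_E (numsg0 S_numsg); lia.
- move=> a b; have [->|a_gt0] := posnP a; first by rewrite add0n.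
  have [->|b_gt0] := posnP b; first by rewrite addn0.
  move=> Sa' Sb'; have := step_pos_gt a_gt0 Sa'; have := step_pos_gt b_gt0 Sb'.
  have [/step_gt //|abF] := ltnP F (a + b).
  move: Sa' Sb'; rewrite !step_E.
  case/orP=> [/andP[Sa _]|/eqP ea] /orP[/andP[Sb _]|/eqP eb] mb ma; try lia.
  by rewrite numsgD //=; lia.
- by exists F.+1; apply: step_gt.
Qed.

Lemma step_frobenius : frobenius_of (step F S) F.
Proof.
have [m_gt0 _ _] := mult_spec S_numsg.
by split; [rewrite step_E (negbTE S_frob.1); lia | apply: step_gt].
Qed.

Lemma step_symmetric : symmetric_about F S -> symmetric_about F (step F S).
Proof.
move=> S_sym x xF x2F; rewrite !step_E.
have [->|xm] := eqVneq x m; first by rewrite [F - m == F - m]eqxx !orbT.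
have [->|xFm] := eqVneq x (F - m); first by rewrite orbT.
have -> : F - x != m by lia.
have -> : (F - x == F - m) = false by lia.
by rewrite /= !andbT !orbF; apply: S_sym.
Qed.

Lemma count_small_step : count_small F S = (count_small F (step F S)).+1.
Proof.
have [m_gt0 Sm _] := mult_spec S_numsg.
rewrite /count_small (@count_predD1 _ _ _ m) ?iota_uniq ?mem_iota ?Sm //=; try lia.
congr _.+1; apply: eq_count => x /=; rewrite step_E.
have [->|_] := eqVneq x (F - m); last by rewrite orbF; case: (S x); case: (x != m).
have -> : (2 * (F - m) < F) = false by lia.
by rewrite !andbF.
Qed.

End SmallMultiplicity.

Lemma step_id (F : nat) (S : pred nat) : F <= 2 * mult S -> step F S = S.
Proof. by rewrite /step ltnNge => ->. Qed.

Lemma symmetric_numsg_step (F : nat) (S : pred nat) :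
  symmetric_numsg F S -> symmetric_numsg F (step F S).
Proof.
case=> S_numsg S_frob S_sym.
have [small|large] := ltnP (2 * mult S) F; last by rewrite step_id.
split; [exact: step_numsg | exact: step_frobenius | exact: step_symmetric].
Qed.

Lemma seqS_symmetric (F : nat) (S : pred nat) n :
  symmetric_numsg F S -> symmetric_numsg F (seqS F S n).
Proof.
by move=> S_sym; elim: n => // n IHn; rewrite /seqS iterS; apply: symmetric_numsg_step.
Qed.

Lemma large_mult_CF (F : nat) (S : pred nat) :
  symmetric_numsg F S -> F <= 2 * mult S -> S =1 CF F.
Proof.
case=> S_numsg S_frob S_sym large x; rewrite /CF.
have [-> | x_gt0] := posnP x; first by rewrite (numsg0 S_numsg).
have [_ _ mult_min] := mult_spec S_numsg.
apply/idP/idP => [Sx | /andP[xF_half xF]].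
  have xF : x != F by apply: contraNneq S_frob.1 => <-.
  have := frobenius_neq_add S_numsg S_frob Sx Sx.
  by have := mult_min x x_gt0 Sx; lia.
have [/S_frob.2 // | xF_le] := ltnP F x.
have /orP[// | SFx] : S x || S (F - x) by apply: S_sym; lia.
by have := mult_min (F - x); rewrite SFx; lia.
Qed.

Lemma large_mult_seqS_CF (F : nat) (S : pred nat) n :
  symmetric_numsg F S -> F <= 2 * mult S -> seqS F S n =1 CF F.
Proof. by move=> S_sym large; rewrite /seqS iter_fix ?step_id //; apply: large_mult_CF. Qed.

Lemma count_small_gt0 (F : nat) (S : pred nat) :
  0 < F -> is_numsg S -> 0 < count_small F S.
Proof.
move=> F_gt0 [S0 _ _]; rewrite /count_small -has_count; apply/hasP.
by exists 0; rewrite ?mem_iota ?S0.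
Qed.

Lemma seqS_CF (F : nat) (S : pred nat) n : 0 < F -> symmetric_numsg F S ->
  count_small F S - 1 <= n -> seqS F S n =1 CF F.
Proof.
move=> F_gt0; elim: n S => [|n IHn] S S_sym n_ge.
all: have [small|large] := ltnP (2 * mult S) F; last exact: large_mult_seqS_CF.
all: have [S_numsg S_frob _] := S_sym; have count_S := count_small_step S_numsg small.
- by have := count_small_gt0 F_gt0 (step_numsg S_numsg S_frob small); lia.
- by rewrite /seqS iterSr; apply: IHn; [exact: symmetric_numsg_step | lia].
Qed.

Theorem mainTheorem4 (F : nat) (S : pred nat) :
  0 < F -> irreducible_numsg S -> frobenius_of S F ->
  (forall n, irreducible_numsg (seqS F S n) /\ frobenius_of (seqS F S n) F) /\
  (forall n, seqS F S ((count_small F S - 1) + n) =1 CF F).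
Proof.
move=> F_gt0 S_irr S_frob.
have S_sym : symmetric_numsg F S.
  split; [exact: S_irr.1 | exact: S_frob |].
  exact: irreducible_symmetric S_irr.1 S_frob S_irr.
split=> n; last exact: seqS_CF F_gt0 S_sym (leq_addr _ _).
have [Sn_numsg Sn_frob Sn_sym] := seqS_symmetric n S_sym.
by split; [exact: symmetric_irreducible Sn_numsg Sn_frob Sn_sym | exact: Sn_frob].
Qed.
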